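(* Let $f(x)=\frac1n\sum_{i=1}^n f_i(x)$ with $f_i:\mathbb{R}^d\to\mathbb{R}$, where each $f_i$ is $L$-smooth ($\|\nabla f_i(x)-\nabla f_i(y)\|\le L\|x-y\|$ for all $x,y$) and $f^*=\inf_{x\in\mathbb{R}^d} f(x)>-\infty$. Run No Full Grad SVRG (described in the context) with stepsize $\gamma\le \frac{1}{20Ln}$. Then, to reach $\varepsilon$-accuracy, where $\varepsilon^2=\frac1S\sum_{s=1}^S\|\nabla f(\omega_s)\|^2$, the method needs $\mathcal{O}\left(\frac{nL}{\varepsilon^2}\right)$ iterations and oracle calls.
   Context: No Full Grad SVRG: input $x_0^0\in\mathbb{R}^d$, $\omega_0=x_0^0$, $\tilde v_0^0=0$, $v_0=0$, stepsize $\gamma>0$. For epochs $s=0,1,\dots,S$: choose a permutation $\pi_s^0,\dots,\pi_s^{n-1}$ of the $n$ component indices (by any shuffling rule, e.g. reshuffling every epoch, shuffling once, or a fixed cyclic order); for $t=0,\dots,n-1$ set $\tilde v_s^{t+1}=\frac{t}{t+1}\tilde v_s^t+\frac1{t+1}\nabla f_{\pi_s^t}(x_s^t)$, $v_s^t=\nabla f_{\pi_s^t}(x_s^t)-\nabla f_{\pi_s^t}(\omega_s)+v_s$, $x_s^{t+1}=x_s^t-\gamma v_s^t$; then set $x_{s+1}^0=x_s^n$, $\omega_{s+1}=x_s^n$, $\tilde v_{s+1}^0=0$, $v_{s+1}=\tilde v_s^n$. An oracle call is one evaluation of a single component gradient $\nabla f_i$; an iteration is one inner step (index $t$). The $\mathcal{O}(\cdot)$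 hides absolute constants and the dependence on the initial gap. *)

From HB Require Import structures.
From mathcomp Require Import all_boot all_order all_algebra.
From mathcomp Require Import all_classical all_reals all_analysis.
Set Implicit Arguments. Unset Strict Implicit. Unset Printing Implicit Defensive.
Import Order.TTheory GRing.Theory Num.Theory.
Import numFieldNormedType.Exports.
Local Open Scope ring_scope.

Definition dotv (R : realType) (d : nat) (u v : 'rV[R]_d) : R :=
  \sum_(i < d) u ord0 i * v ord0 i.
Definition enorm (R : realType) (d : nat) (u : 'rV[R]_d) : R :=
  Num.sqrt (dotv u u).

Definition is_gradient (R : realType) (d : nat)
    (f : 'rV[R]_d -> R) (g : 'rV[R]_d -> 'rV[R]_d) : Prop :=
  forall x, differentiable f x /\ forall h, 'd f x h = dotv (g x) h.

Definition favg (R : realType) (d n : nat) (f : nat -> 'rV[R]_d -> R)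
    (x : 'rV[R]_d) : R := n%:R^-1 * \sum_(i < n) f i x.
Definition gavg (R : realType) (d n : nat) (g : nat -> 'rV[R]_d -> 'rV[R]_d)
    (x : 'rV[R]_d) : 'rV[R]_d := n%:R^-1 *: \sum_(i < n) g i x.

(* Inner loop of epoch s of No Full Grad SVRG.
   g i = grad f_i, gamma = stepsize, pi s t = pi_s^t.
   Given x_s^0, omega_s, v_s, returns (x_s^t, tilde v_s^t). *)
Fixpoint nfg_inner (R : realType) (d : nat) (g : nat -> 'rV[R]_d -> 'rV[R]_d)
    (gamma : R) (pi : nat -> nat -> nat) (s : nat)
    (x0 om v : 'rV[R]_d) (t : nat) : 'rV[R]_d * 'rV[R]_d :=
  match t with
  | 0%N => (x0, 0)
  | t'.+1 =>
      let: (x, vt) := nfg_inner g gamma pi s x0 om v t' in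
      let i := pi s t' in
      (x - gamma *: (g i x - g i om + v),
       (t'%:R / (t'.+1)%:R) *: vt + (t'.+1)%:R^-1 *: g i x)
  end.

(* Outer state at the start of epoch s: (omega_s, v_s); note x_s^0 = omega_s
   for every s (omega_0 = x_0^0 and x_{s+1}^0 = omega_{s+1} = x_s^n). *)
Fixpoint nfg_state (R : realType) (d n : nat) (g : nat -> 'rV[R]_d -> 'rV[R]_d)
    (gamma : R) (pi : nat -> nat -> nat) (x0 : 'rV[R]_d) (s : nat)
    : 'rV[R]_d * 'rV[R]_d :=
  match s with
  | 0%N => (x0, 0)
  | s'.+1 =>
      let: (om, v) := nfg_state n g gamma pi x0 s' in
      nfg_inner g gamma pi s' om om v n
  end.

Definition nfg_omega (R : realType) (d n : nat) (g : nat -> 'rV[R]_d -> 'rV[R]_d)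
    (gamma : R) (pi : nat -> nat -> nat) (x0 : 'rV[R]_d) (s : nat) : 'rV[R]_d :=
  (nfg_state n g gamma pi x0 s).1.

(* Set eta = gamma n = 1/(20 L).  Every inner iterate of epoch s stays within
   |v_s| / (10 L) of omega_s, so the averaged gradient v_{s+1} differs from
   grad f(omega_s) by at most |v_s| / 10, and the epoch is the step
   omega_{s+1} = omega_s - eta (grad f(omega_s) + b_s) with a small error b_s.
   The descent lemma then makes
     Phi_s = f(omega_s) + 2 eta |v_s - grad f(omega_s)|^2
   decrease by at least eta |grad f(omega_s)|^2 / 2 per epoch.  Telescoping,
   with v_0 = 0 and |grad f(x_0)|^2 <= 4 L (f(x_0) - f^* ), gives
   sum_{s=1}^S |grad f(omega_s)|^2 <= 52 L (f(x_0) - f^* ). *)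

From HB Require Import structures.
From mathcomp Require Import all_boot all_order all_algebra.
From mathcomp Require Import all_classical all_reals all_analysis.
From mathcomp Require Import ring lra.
Set Implicit Arguments. Unset Strict Implicit. Unset Printing Implicit Defensive.
Import Order.TTheory GRing.Theory Num.Theory.
Import numFieldNormedType.Exports.
Local Open Scope ring_scope.
Local Open Scope classical_set_scope.

Section Euclidean.
Variables (R : realType) (d : nat).
Implicit Types (u v w : 'rV[R]_d).

Lemma dotvC u v : dotv u v = dotv v u.
Proof. by apply: eq_bigr => i _; rewrite mulrC. Qed.

Lemma dotvDl u v w : dotv (u + v) w = dotv u w + dotv v w.
Proof. by rewrite /dotv -big_split; apply: eq_bigr => i _; rewrite mxE mulrDl. Qed.

Lemma dotvZl (a : R) u v : dotv (a *: u) v = a * dotv u v.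
Proof. by rewrite /dotv mulr_sumr; apply: eq_bigr => i _; rewrite mxE mulrA. Qed.

Lemma dotvNl u v : dotv (- u) v = - dotv u v.
Proof. by rewrite -scaleN1r dotvZl mulN1r. Qed.

Lemma dotvBl u v w : dotv (u - v) w = dotv u w - dotv v w.
Proof. by rewrite dotvDl dotvNl. Qed.

Lemma dotvDr u v w : dotv u (v + w) = dotv u v + dotv u w.
Proof. by rewrite dotvC dotvDl !(dotvC u). Qed.

Lemma dotvZr (a : R) u v : dotv u (a *: v) = a * dotv u v.
Proof. by rewrite dotvC dotvZl dotvC. Qed.

Lemma dotvNr u v : dotv u (- v) = - dotv u v.
Proof. by rewrite dotvC dotvNl dotvC. Qed.

Lemma dotvBr u v w : dotv u (v - w) = dotv u v - dotv u w.
Proof. by rewrite dotvDr dotvNr. Qed.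

Lemma dotv0l v : dotv 0 v = 0.
Proof. by rewrite /dotv big1 // => i _; rewrite mxE mul0r. Qed.

Lemma dotv_suml (I : Type) (r : seq I) (P : pred I) (F : I -> 'rV[R]_d) v :
  dotv (\sum_(i <- r | P i) F i) v = \sum_(i <- r | P i) dotv (F i) v.
Proof. by elim/big_rec2: _ => [|i y1 y2 _ <-]; rewrite ?dotv0l ?dotvDl. Qed.

Lemma dotvv_ge0 u : 0 <= dotv u u.
Proof. by apply: sumr_ge0 => i _; rewrite -expr2 sqr_ge0. Qed.

Lemma dotvv_eq0 u : (dotv u u == 0) = (u == 0).
Proof.
apply/idP/eqP => [|->]; last by rewrite dotv0l.
rewrite psumr_eq0 => [/allP u0|i _]; last by rewrite -expr2 sqr_ge0.
apply/rowP => i; rewrite mxE.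
by move: (u0 i (mem_index_enum i)); rewrite implyTb mulf_eq0 orbb => /eqP.
Qed.

Lemma enorm_ge0 u : 0 <= enorm u.
Proof. exact: sqrtr_ge0. Qed.

Lemma sqr_enorm u : enorm u ^+ 2 = dotv u u.
Proof. by rewrite sqr_sqrtr // dotvv_ge0. Qed.

Lemma enorm0 : enorm (0 : 'rV[R]_d) = 0.
Proof. by rewrite /enorm dotv0l sqrtr0. Qed.

Lemma enorm_eq0 u : (enorm u == 0) = (u == 0).
Proof. by rewrite -sqrf_eq0 sqr_enorm dotvv_eq0. Qed.

Lemma enormZ (a : R) u : enorm (a *: u) = `|a| * enorm u.
Proof.
by rewrite /enorm dotvZl dotvZr mulrA -expr2 sqrtrM ?sqr_ge0 // sqrtr_sqr.
Qed.

Lemma enormN u : enorm (- u) = enorm u.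
Proof. by rewrite -scaleN1r enormZ normrN normr1 mul1r. Qed.

Lemma cauchy_schwarz u v : dotv u v <= enorm u * enorm v.
Proof.
have [|ab_neq0] := eqVneq (enorm u * enorm v) 0.
  move/eqP; rewrite mulf_eq0 !enorm_eq0 => /orP[]/eqP->.
    by rewrite dotv0l enorm0 mul0r.
  by rewrite dotvC dotv0l enorm0 mulr0.
set a := enorm u; set b := enorm v in ab_neq0 *.
have ab_pos : 0 < a * b by rewrite lt0r ab_neq0 mulr_ge0 ?enorm_ge0.
have : 0 <= dotv (b *: u - a *: v) (b *: u - a *: v) by exact: dotvv_ge0.
rewrite !(dotvBl, dotvBr, dotvZl, dotvZr) (dotvC v u) -!sqr_enorm -/a -/b.
have -> : b * (b * a ^+ 2 - a * dotv u v) - a * (b * dotv u v - a * b ^+ 2)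
    = (a * b) *+ 2 * (a * b - dotv u v) by ring.
by rewrite pmulr_rge0 ?pmulrn_lgt0 // subr_ge0.
Qed.

Lemma cauchy_schwarzN u v : - (enorm u * enorm v) <= dotv u v.
Proof. by rewrite lerNl -dotvNl -(enormN u) cauchy_schwarz. Qed.

Lemma enormD u v : enorm (u + v) <= enorm u + enorm v.
Proof.
rewrite -ler_sqr ?nnegrE ?addr_ge0 ?enorm_ge0 //.
rewrite sqrrD !sqr_enorm dotvDl !dotvDr (dotvC v u) -!sqr_enorm.
by have := cauchy_schwarz u v; lra.
Qed.

Lemma enorm_sum (I : Type) (r : seq I) (P : pred I) (F : I -> 'rV[R]_d) :
  enorm (\sum_(i <- r | P i) F i) <= \sum_(i <- r | P i) enorm (F i).
Proof.
elim/big_rec2: _ => [|i y1 y2 _ H]; first by rewrite enorm0.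
by apply: le_trans (enormD _ _) _; rewrite lerD2l.
Qed.

End Euclidean.

Lemma is_derive_gradient_line (R : realType) (d : nat) (f : 'rV[R]_d -> R)
    (g : 'rV[R]_d -> 'rV[R]_d) (x h : 'rV[R]_d) (t : R) :
  is_gradient f g ->
  is_derive t 1 (fun s : R => f (s *: h + x)) (dotv (g (t *: h + x)) h).
Proof.
move=> fg; have [Df dfE] := fg (t *: h + x).
have quotE : (fun s : R => s^-1 *: (f ((s *: 1 + t) *: h + x) - f (t *: h + x)))
    = (fun s : R => s^-1 *: (f (s *: h + (t *: h + x)) - f (t *: h + x))).
  by apply/funext => s; rewrite [s *: 1]mulr1 scalerDl addrA.
apply: DeriveDef; first by rewrite /derivable /= quotE; exact: diff_derivable.
by rewrite /derive /= quotE -/(derive f _ h) deriveE.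
Qed.

(* With constant L rather than the sharp L / 2: the mean value theorem only
   bounds the gradient along the segment at an unknown point. *)
Lemma descent_lemma (R : realType) (d : nat) (f : 'rV[R]_d -> R)
    (g : 'rV[R]_d -> 'rV[R]_d) (L : R) :
  0 <= L -> is_gradient f g ->
  (forall x y, enorm (g x - g y) <= L * enorm (x - y)) ->
  forall x y, f y <= f x + dotv (g x) (y - x) + L * enorm (y - x) ^+ 2.
Proof.
move=> L0 fg gL x y; set h := y - x.
have f'E t := is_derive_gradient_line x h t fg.
have [c] : exists2 c, c \in `]0, 1[%R &
    f (1 *: h + x) - f (0 *: h + x) = dotv (g (c *: h + x)) h * (1 - 0).
  apply: MVT => //.
  by apply: derivable_within_continuous => z _; exact: ex_derive.
rewrite in_itv /= => /andP[c0 c1].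
rewrite scale1r scale0r add0r subr0 mulr1 /h addrNK -/h => /(canRL (subrK _))->.
rewrite -addrA [f x + _]addrC lerD2r -[X in X <= _](subrK (dotv (g x) h)) -dotvBl.
rewrite [_ + dotv (g x) h]addrC lerD2l.
have gcL : enorm (g (c *: h + x) - g x) <= L * (c * enorm h).
  by move: (gL (c *: h + x) x); rewrite addrK enormZ gtr0_norm.
apply: le_trans (cauchy_schwarz _ _) _.
apply: le_trans (ler_wpM2r (enorm_ge0 h) gcL) _.
rewrite expr2 mulrA ler_wpM2r ?enorm_ge0 // mulrCA ler_piMl ?mulr_ge0 ?enorm_ge0 //.
exact: ltW.
Qed.

Section Average.
Variables (R : realType) (d n : nat) (L : R).
Variables (f : nat -> 'rV[R]_d -> R) (g : nat -> 'rV[R]_d -> 'rV[R]_d).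
Hypothesis n_gt0 : (0 < n)%N.
Hypothesis gL : forall i, (i < n)%N ->
  forall x y, enorm (g i x - g i y) <= L * enorm (x - y).

Let n_pos : (0 : R) < n%:R. Proof. by rewrite ltr0n. Qed.

Lemma favg_descent : 0 <= L -> (forall i, (i < n)%N -> is_gradient (f i) (g i)) ->
  forall x y, favg n f y <= favg n f x + dotv (gavg n g x) (y - x) + L * enorm (y - x) ^+ 2.
Proof.
move=> L0 fg x y; rewrite /favg /gavg dotvZl dotv_suml -mulrDr.
rewrite -[L * _](mulKf (lt0r_neq0 n_pos)) -mulrDr ler_pM2l ?invr_gt0 //.
rewrite -big_split /= mulr_natl -[X in _ *+ X]card_ord -sumr_const -big_split /=.
by apply: ler_sum => i _; apply: descent_lemma => //; [exact: fg | exact: gL].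
Qed.

Lemma gavg_lipschitz x y : enorm (gavg n g x - gavg n g y) <= L * enorm (x - y).
Proof.
rewrite /gavg -scalerBr -sumrB enormZ ger0_norm ?invr_ge0 ?ler0n //.
rewrite ler_pdivrMl // mulr_natl -[X in _ *+ X]card_ord -sumr_const.
apply: le_trans (enorm_sum _ _ _) _.
by apply: ler_sum => i _; exact: gL.
Qed.

End Average.

Lemma sqr_enorm_grad_le (R : realType) (d : nat) (F : 'rV[R]_d -> R)
    (G : 'rV[R]_d -> 'rV[R]_d) (L fstar : R) :
  0 < L -> (forall x y, F y <= F x + dotv (G x) (y - x) + L * enorm (y - x) ^+ 2) ->
  (forall x, fstar <= F x) ->
  forall x, enorm (G x) ^+ 2 <= 4 * L * (F x - fstar).
Proof.
move=> L_gt0 descent fstar_le x.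
set c := (2 * L)^-1; have c_gt0 : 0 < c by rewrite invr_gt0 mulr_gt0.
have := descent x (x - c *: G x).
have -> : x - c *: G x - x = - (c *: G x) by rewrite addrAC subrr add0r.
rewrite dotvNr dotvZr -sqr_enorm enormN enormZ gtr0_norm //.
have := fstar_le (x - c *: G x); rewrite /c.
set p := enorm (G x) ^+ 2 => fstar_le_y descent_y.
suff : (4 * L)^-1 * p <= F x - fstar by rewrite ler_pdivrMl ?mulr_gt0.
have -> : (4 * L)^-1 * p = (2 * L)^-1 * p - L * ((2 * L)^-1 * enorm (G x)) ^+ 2.
  by rewrite /p; field; rewrite lt0r_neq0.
lra.
Qed.

Lemma lyapunov_scalar_bound (R : realType) (eta p e a b e' dF : R) :
  0 < eta -> 0 <= p -> 0 <= e -> 0 <= b -> 0 <= e' ->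
  a <= (p + e) / 10 -> b <= a + e ->
  dF <= eta * (- p ^+ 2 + p * b + (p + b) ^+ 2 / 20) -> e' <= a + (p + b) / 20 ->
  dF + 2 * eta * e' ^+ 2 <= 2 * eta * e ^+ 2 - eta * p ^+ 2 / 2.
Proof.
move=> eta_gt0 p0 e0 b0 e'0 ha hb hF he.
suff : - p ^+ 2 + p * b + (p + b) ^+ 2 / 20 + 2 * e' ^+ 2 <= 2 * e ^+ 2 - p ^+ 2 / 2.
  by move/(ler_wpM2l (ltW eta_gt0)); lra.
(* Substituting the bounds on b and e' leaves a positive definite quadratic
   form in p and e, certified by the square (2 p - 5 e)^2. *)
have hB : b <= p / 10 + e * 11 / 10 by lra.
have hE : e' <= (p + e) * 31 / 200 by lra.
have h1 : p * b <= p * (p / 10 + e * 11 / 10) by apply: ler_wpM2l.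
have h2 : (p + b) ^+ 2 <= (p + (p / 10 + e * 11 / 10)) ^+ 2.
  by rewrite ler_sqr ?nnegrE; lra.
have h3 : e' ^+ 2 <= ((p + e) * 31 / 200) ^+ 2 by rewrite ler_sqr ?nnegrE; lra.
have h4 : 0 <= (2 * p - 5 * e) ^+ 2 by apply: sqr_ge0.
have h5 : 0 <= p * e by apply: mulr_ge0.
nra.
Qed.

Section LyapunovStep.
Variables (R : realType) (d : nat) (F : 'rV[R]_d -> R) (G : 'rV[R]_d -> 'rV[R]_d) (L : R).
Hypothesis L_gt0 : 0 < L.
Hypothesis descent :
  forall x y, F y <= F x + dotv (G x) (y - x) + L * enorm (y - x) ^+ 2.
Hypothesis GL : forall x y, enorm (G x - G y) <= L * enorm (x - y).

Let eta := (20 * L)^-1.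

Let eta_gt0 : 0 < eta. Proof. by rewrite invr_gt0 mulr_gt0. Qed.

Let L_eta : L * eta = 20^-1. Proof. by rewrite /eta; field; rewrite lt0r_neq0. Qed.

Lemma lyapunov_step om om' v v' :
  enorm (v' - G om) <= enorm v / 10 ->
  om' = om - eta *: ((v' - G om) + v) ->
  F om' + 2 * eta * enorm (v' - G om') ^+ 2 <=
  F om + 2 * eta * enorm (v - G om) ^+ 2 - eta * enorm (G om) ^+ 2 / 2.
Proof.
move=> v'_err om'E.
set p := enorm (G om); set e := enorm (v - G om).
set aV := v' - G om; set bV := aV + (v - G om); set b := enorm bV.
have step : om' - om = - (eta *: (G om + bV)).
  by rewrite om'E; apply/rowP => j; rewrite !mxE; ring.
have step_le : enorm (om' - om) <= eta * (p + b).
  by rewrite step enormN enormZ gtr0_norm // ler_wpM2l ?enormD // ltW.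
have ha : enorm aV <= (p + e) / 10.
  apply: le_trans v'_err _; rewrite ler_pM2r // -[v](subrK (G om)) addrC.
  exact: enormD.
have hb : b <= enorm aV + e by exact: enormD.
have hF : F om' - F om <= eta * (- p ^+ 2 + p * b + (p + b) ^+ 2 / 20).
  have sq_le : L * enorm (om' - om) ^+ 2 <= eta * ((p + b) ^+ 2 / 20).
    have -> : eta * ((p + b) ^+ 2 / 20) = L * (eta * (p + b)) ^+ 2.
      by rewrite -L_eta; ring.
    rewrite ler_pM2l //.
    by rewrite ler_sqr ?nnegrE ?enorm_ge0 // mulr_ge0 ?addr_ge0 ?enorm_ge0 ?ltW.
  have := descent om om'; rewrite {1}step dotvNr dotvZr dotvDr -sqr_enorm -/p.
  have := ler_wpM2l (ltW eta_gt0) (cauchy_schwarzN (G om) bV); rewrite -/p -/b.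
  lra.
have he : enorm (v' - G om') <= enorm aV + (p + b) / 20.
  rewrite -[v' - G om'](subrKA (G om)) -/aV; apply: le_trans (enormD _ _) _.
  rewrite lerD2l; apply: le_trans (GL _ _) _; rewrite -enormN opprB.
  by apply: le_trans (ler_wpM2l (ltW L_gt0) step_le) _; rewrite mulrA L_eta mulrC.
have := lyapunov_scalar_bound eta_gt0 (enorm_ge0 _) (enorm_ge0 _) (enorm_ge0 _)
  (enorm_ge0 _) ha hb hF he.
rewrite -/p -/e; lra.
Qed.

End LyapunovStep.

Lemma perm_iota_sum (V : zmodType) (n : nat) (p : nat -> nat) (F : nat -> V) :
  perm_eq [seq p t | t <- iota 0 n] (iota 0 n) ->
  \sum_(k < n) F (p k) = \sum_(i < n) F i.
Proof.
move=> p_perm; rewrite -(big_mkord xpredT (F \o p)) -(big_mkord xpredT F).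
by rewrite /index_iota subn0 -(big_map p xpredT F) (perm_big _ p_perm).
Qed.

Lemma perm_iota_lt (n : nat) (p : nat -> nat) k :
  perm_eq [seq p t | t <- iota 0 n] (iota 0 n) -> (k < n)%N -> (p k < n)%N.
Proof.
move=> p_perm k_lt_n.
have : p k \in [seq p t | t <- iota 0 n] by apply: map_f; rewrite mem_iota.
by rewrite (perm_mem p_perm) mem_iota.
Qed.

Section InnerLoop.
Variables (R : realType) (d : nat) (g : nat -> 'rV[R]_d -> 'rV[R]_d) (gamma : R).
Variables (pi : nat -> nat -> nat) (s : nat) (om v : 'rV[R]_d).

Definition nfg_iterate t := (nfg_inner g gamma pi s om om v t).1.
Definition nfg_grad_avg t := (nfg_inner g gamma pi s om om v t).2.

Lemma nfg_iterateS t : nfg_iterate t.+1 =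
  nfg_iterate t - gamma *: (g (pi s t) (nfg_iterate t) - g (pi s t) om + v).
Proof. by rewrite /nfg_iterate /=; case: nfg_inner. Qed.

Lemma nfg_grad_avgS t : nfg_grad_avg t.+1 =
  (t%:R / t.+1%:R) *: nfg_grad_avg t + t.+1%:R^-1 *: g (pi s t) (nfg_iterate t).
Proof. by rewrite /nfg_grad_avg /nfg_iterate /=; case: nfg_inner. Qed.

Lemma nfg_iterateE t : nfg_iterate t =
  om - gamma *: \sum_(k < t) (g (pi s k) (nfg_iterate k) - g (pi s k) om)
     - (gamma * t%:R) *: v.
Proof.
elim: t => [|t IH]; first by rewrite big_ord0 scaler0 mulr0 scale0r !subr0.
rewrite nfg_iterateS {1}IH big_ord_recr /= -natr1.
by apply/rowP => j; rewrite !mxE; ring.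
Qed.

Lemma nfg_grad_avgE t :
  t%:R *: nfg_grad_avg t = \sum_(k < t) g (pi s k) (nfg_iterate k).
Proof.
elim: t => [|t IH]; first by rewrite big_ord0 scale0r.
have t1_neq0 : t.+1%:R != 0 :> R by rewrite pnatr_eq0.
by rewrite nfg_grad_avgS big_ord_recr /= -IH scalerDr !scalerA mulrCA divff // mulr1 scale1r.
Qed.

End InnerLoop.

Section Epoch.
Variables (R : realType) (d n : nat) (L : R) (g : nat -> 'rV[R]_d -> 'rV[R]_d).
Variables (pi : nat -> nat -> nat) (s : nat) (om v : 'rV[R]_d).
Hypothesis n_gt0 : (0 < n)%N.
Hypothesis L_gt0 : 0 < L.
Hypothesis gL : forall i, (i < n)%N ->
  forall x y, enorm (g i x - g i y) <= L * enorm (x - y).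
Hypothesis pi_perm : perm_eq [seq pi s t | t <- iota 0 n] (iota 0 n).

Let gamma := (20 * L * n%:R)^-1.
Let x := nfg_iterate g gamma pi s om v.
Let v' := nfg_grad_avg g gamma pi s om v n.

Let gamma_ge0 : 0 <= gamma.
Proof. by rewrite invr_ge0 mulr_ge0 ?ler0n // mulr_ge0 // ltW. Qed.

Let gamma_nE : gamma * n%:R = (20 * L)^-1.
Proof. by rewrite /gamma invfM mulfVK // pnatr_eq0 -lt0n. Qed.

Let L_mul_bound e : L * (e / (10 * L)) = e / 10.
Proof. by field; rewrite lt0r_neq0. Qed.

Lemma nfg_iterate_dist t : (t <= n)%N -> enorm (x t - om) <= enorm v / (10 * L).
Proof.
elim/ltn_ind: t => t IH t_le_n.
set D := \sum_(k < t) (g (pi s k) (x k) - g (pi s k) om).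
have -> : x t - om = - (gamma *: D + (gamma * t%:R) *: v).
  by rewrite /x nfg_iterateE; apply/rowP => j; rewrite !mxE; ring.
have D_le : enorm D <= t%:R * (enorm v / 10).
  apply: le_trans (enorm_sum _ _ _) _.
  rewrite mulr_natl -[X in _ *+ X]card_ord -sumr_const; apply: ler_sum => k _.
  have k_lt_n : (k < n)%N := leq_trans (ltn_ord k) t_le_n.
  apply: le_trans (gL (perm_iota_lt pi_perm k_lt_n) _ _) _.
  by rewrite -L_mul_bound ler_pM2l // IH // ltnW.
rewrite enormN; apply: le_trans (enormD _ _) _.
rewrite !enormZ !ger0_norm ?mulr_ge0 //.
have gt_le_gn : gamma * t%:R <= (20 * L)^-1.
  by rewrite -gamma_nE ler_wpM2l // ler_nat.
have -> : enorm v / (10 * L) = 2 * (20 * L)^-1 * enorm v.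
  by field; rewrite lt0r_neq0.
have := ler_wpM2l gamma_ge0 D_le; have := enorm_ge0 v.
have := mulr_ge0 gamma_ge0 (ler0n R t); rewrite mulrA; nra.
Qed.

Lemma nfg_grad_avg_sub : v' - gavg n g om =
  n%:R^-1 *: \sum_(k < n) (g (pi s k) (x k) - g (pi s k) om).
Proof.
have n_neq0 : n%:R != 0 :> R by rewrite pnatr_eq0 -lt0n.
rewrite sumrB scalerBr -nfg_grad_avgE scalerA mulVf // scale1r.
by rewrite (perm_iota_sum (g^~ om) pi_perm).
Qed.

Lemma nfg_grad_avg_error : enorm (v' - gavg n g om) <= enorm v / 10.
Proof.
have n_pos : (0 : R) < n%:R by rewrite ltr0n.
rewrite nfg_grad_avg_sub enormZ ger0_norm ?invr_ge0 ?ler0n //.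
rewrite ler_pdivrMl // mulr_natl -[X in _ *+ X]card_ord -sumr_const.
apply: le_trans (enorm_sum _ _ _) _; apply: ler_sum => k _.
apply: le_trans (gL (perm_iota_lt pi_perm (ltn_ord k)) _ _) _.
by rewrite -L_mul_bound ler_pM2l // nfg_iterate_dist // ltnW.
Qed.

Lemma nfg_iterate_last : x n = om - (20 * L)^-1 *: ((v' - gavg n g om) + v).
Proof.
have n_neq0 : n%:R != 0 :> R by rewrite pnatr_eq0 -lt0n.
rewrite -gamma_nE nfg_grad_avg_sub /x nfg_iterateE.
by apply/rowP => j; rewrite !mxE; field.
Qed.

End Epoch.

Lemma nfg_stateS (R : realType) (d n : nat) (g : nat -> 'rV[R]_d -> 'rV[R]_d)
    (gamma : R) (pi : nat -> nat -> nat) (x0 : 'rV[R]_d) (s : nat) :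
  let state := nfg_state n g gamma pi x0 s in
  nfg_state n g gamma pi x0 s.+1 =
    (nfg_iterate g gamma pi s state.1 state.2 n,
     nfg_grad_avg g gamma pi s state.1 state.2 n).
Proof.
rewrite /= /nfg_iterate /nfg_grad_avg.
by case: nfg_state => om v; case: nfg_inner.
Qed.

Lemma sum_le_telescope (R : realType) (Phi q : nat -> R) (lb : R) :
  (forall s, Phi s.+1 <= Phi s - q s) -> (forall s, lb <= Phi s) ->
  forall N, \sum_(0 <= s < N) q s <= Phi 0%N - lb.
Proof.
move=> Phi_dec lb_le N; apply: le_trans (lerB (lexx _) (lb_le N)).
elim: N => [|N IH]; first by rewrite big_geq // subrr.
by rewrite big_nat_recr //=; have := Phi_dec N; lra.
Qed.

Lemma nfg_sum_sqr_grad_le (R : realType) (d n : nat) (L : R)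
    (f : nat -> 'rV[R]_d -> R) (g : nat -> 'rV[R]_d -> 'rV[R]_d)
    (pi : nat -> nat -> nat) (x0 : 'rV[R]_d) (S : nat) :
  (0 < n)%N -> 0 < L ->
  (forall i, (i < n)%N -> is_gradient (f i) (g i)) ->
  (forall i, (i < n)%N -> forall x y, enorm (g i x - g i y) <= L * enorm (x - y)) ->
  (exists m : R, forall x, m <= favg n f x) ->
  (forall s, perm_eq [seq pi s t | t <- iota 0 n] (iota 0 n)) ->
  \sum_(1 <= s < S.+1)
      enorm (gavg n g (nfg_omega n g (20 * L * n%:R)^-1 pi x0 s)) ^+ 2
    <= 52 * L * (favg n f x0 - inf (range (favg n f))).
Proof.
move=> n_gt0 L_gt0 fg gL [m m_le] pi_perm.
set F := favg n f; set G := gavg n g; set fstar := inf _.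
pose state := nfg_state n g (20 * L * n%:R)^-1 pi x0.
have descent := favg_descent n_gt0 gL (ltW L_gt0) fg.
have fstar_le x : fstar <= F x.
  by apply: ge_inf; [exists m => _ [y _ <-] | exists x].
pose eta := (20 * L)^-1.
pose p s := enorm (G (state s).1).
pose Phi s := F (state s).1 + 2 * eta * enorm ((state s).2 - G (state s).1) ^+ 2.
have Phi_dec s : Phi s.+1 <= Phi s - eta * p s ^+ 2 / 2.
  rewrite /Phi /state nfg_stateS /=.
  apply: lyapunov_step; [exact: L_gt0 | exact: descent | exact: gavg_lipschitz |
    exact: nfg_grad_avg_error | exact: nfg_iterate_last].
have fstar_le_Phi N : fstar <= Phi N.
  apply: le_trans (fstar_le (state N).1) _; rewrite lerDl mulr_ge0 ?sqr_ge0 //.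
  by rewrite mulr_ge0 // invr_ge0 mulr_ge0 // ltW.
have Phi0 : Phi 0%N = F x0 + 2 * eta * p 0%N ^+ 2 by rewrite /Phi /p /= sub0r enormN.
have p0_le : p 0%N ^+ 2 <= 4 * L * (F x0 - fstar).
  exact: sqr_enorm_grad_le L_gt0 descent fstar_le x0.
change (\sum_(1 <= s < S.+1) p s ^+ 2 <= 52 * L * (F x0 - fstar)).
have := sum_le_telescope Phi_dec fstar_le_Phi S.+1.
rewrite big_ltn // (eq_bigr _ (fun s _ => mulrAC _ _ _)) /=.
rewrite [eta * _ / 2]mulrAC -mulr_sumr -mulrDr Phi0.
have -> : eta / 2 = (40 * L)^-1 by rewrite /eta; field; rewrite lt0r_neq0.
have -> : F x0 + 2 * eta * p 0%N ^+ 2 - fstar =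
    (40 * L)^-1 * (40 * L * (F x0 - fstar) + 4 * p 0%N ^+ 2).
  by rewrite /eta; field; rewrite lt0r_neq0.
rewrite ler_pM2l ?invr_gt0 ?mulr_gt0 //; lra.
Qed.

Theorem theorem1 :
  exists C : nat, (0 < C)%N /\
  forall (R : realType) (d n : nat) (L : R)
    (f : nat -> 'rV[R]_d -> R) (g : nat -> 'rV[R]_d -> 'rV[R]_d)
    (pi : nat -> nat -> nat) (x0 : 'rV[R]_d),
    (0 < n)%N -> 0 < L ->
    (forall i, (i < n)%N -> is_gradient (f i) (g i)) ->
    (forall i, (i < n)%N -> forall x y : 'rV[R]_d,
        enorm (g i x - g i y) <= L * enorm (x - y)) ->
    (exists m : R, forall x, m <= favg n f x) ->
    (forall s, perm_eq [seq pi s t | t <- iota 0 n] (iota 0 n)) ->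
    let gamma := (20 * L * n%:R)^-1 in
    let fstar := inf (range (favg n f)) in
    forall (eps : R) (S : nat), 0 < eps -> (1 <= S)%N ->
      C%:R * L * (favg n f x0 - fstar) / eps ^+ 2 <= S%:R ->
      S%:R^-1 * \sum_(1 <= s < S.+1)
          enorm (gavg n g (nfg_omega n g gamma pi x0 s)) ^+ 2
        <= eps ^+ 2.
Proof.
exists 52%N; split => // R d n L f g pi x0 n_gt0 L_gt0 fg gL f_bdd pi_perm.
move=> gamma fstar eps S eps_gt0 S_ge1 S_large.
have S_pos : 0 < S%:R :> R by rewrite ltr0n.
rewrite ler_pdivrMl // (le_trans (nfg_sum_sqr_grad_le x0 S n_gt0 L_gt0 fg gL f_bdd pi_perm)) //.
by move: S_large; rewrite ler_pdivrMr ?exprn_gt0.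
Qed.
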